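(* Let $f : \{0,1\}^n \to \{0,1\}$ be a degree-1 threshold function, i.e. there are integers $a_1,\dots,a_n,b$ (of arbitrary magnitude) such that $f(x)=1$ if and only if $a_1x_1+\cdots+a_nx_n \le b$. Then for any partition of the variables $\{x_1,\dots,x_n\}$ into two parts $P_1,P_2$, where Alice sees the values of the variables in $P_1$ and Bob sees the values of the variables in $P_2$, $f$ can be computed by a public-coin randomized communication protocol with error probability $O(1/n)$ on every input and communication $O(\log n)$ bits (the constants in the $O(\cdot)$ being absolute, independent of $f$ and of the partition).
   Context: Randomized protocols are in the public-coin model: both players see all random coin flips. The error probability of the protocol on an input is the probability over the coins that it outputs a value different from $f$ of that input. *)

From mathcomp Require Import all_boot all_order all_algebra.
Set Implicit Arguments. Unset Strict Implicit. Unset Printing Implicit Defensive.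
Import Order.TTheory GRing.Theory Num.Theory.

Definition input (n : nat) := {ffun 'I_n -> bool}.

Definition is_threshold (n : nat) (f : input n -> bool) : Prop :=
  exists (a : 'I_n -> int) (b : int),
    forall x : input n, f x = (\sum_(i < n) a i * (x i)%:Z <= b)%R.

(* Deterministic protocol tree: at each internal node the speaker
   (true = Alice, false = Bob) sends one bit g x; leaves hold the output,
   known to both players. *)
Inductive proto (T : Type) : Type :=
| PLeaf of bool
| PNode of bool & (T -> bool) & proto T & proto T.
Arguments PLeaf {T}.

Fixpoint run (T : Type) (p : proto T) (x : T) : bool :=
  match p with
  | PLeaf b => b
  | PNode _ g l r => if g x then run r x else run l x
  end.

(* Communication cost = number of bits sent on the longest path. *)
Fixpoint depth (T : Type) (p : proto T) : nat :=
  match p with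
  | PLeaf _ => 0
  | PNode _ _ l r => (maxn (depth l) (depth r)).+1
  end.

Definition depends_only (n : nat) (A : pred 'I_n) (g : input n -> bool) : Prop :=
  forall x y : input n, (forall i, A i -> x i = y i) -> g x = g y.

(* Alice sees exactly the variables in S (= P1), Bob those outside S (= P2):
   each bit sent is a function only of the sender's variables. *)
Fixpoint valid (n : nat) (S : {set 'I_n}) (p : proto (input n)) : Prop :=
  match p with
  | PLeaf _ => True
  | PNode alice g l r =>
      depends_only (if alice then (fun i => i \in S) else (fun i => i \notin S)) g
      /\ valid S l /\ valid S r
  end.

From mathcomp Require Import all_boot all_order all_algebra.
From mathcomp Require Import zify.
Set Implicit Arguments. Unset Strict Implicit. Unset Printing Implicit Defensive.
Import Order.TTheory GRing.Theory Num.Theory.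

(* Write [f x = (sA x <= sB x)] with [sA] depending only on Alice's variables
   and [sB] only on Bob's, and replace both sides by their ranks among the
   [2 ^ n.+1] values of [sA] and [sB]: it remains to compare two [n.+1]-bit
   numbers, which is decided by the highest bit where they differ, i.e. by the
   least [ks] such that their bits from position [ks] on agree.  The players
   find [ks] by a binary search whose query "do the bits from [k] on agree?"
   is answered by comparing 10 random parities: it never rejects [k >= ks] and
   accepts [k < ks] with probability [2 ^ -10].  The search backtracks along a
   stack of accepted candidates; a potential starting below [3 K], where
   [K = log n + 1], drops at every round that is not misled and grows by at
   most 2 otherwise, so [9 K] rounds fail only if [2 K] of them are misled,
   an event of probability at most ['C(9 K, 2 K) 2 ^ (-18 K) <= 1 / n]. *)

(* All words of length [T] over [B], with multiplicity: counting in this list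
   is measuring probability under [T] independent uniform draws from [B]. *)
Fixpoint words (A : Type) (T : nat) (B : seq A) : seq (seq A) :=
  if T is T'.+1 then flatten [seq [seq a :: t | t <- words T' B] | a <- B]
  else [:: [::]].

Lemma count_wordsS A (P : pred (seq A)) T B :
  count P (words T.+1 B) =
  sumn [seq count (fun t => P (a :: t)) (words T B) | a <- B].
Proof.
rewrite /= count_flatten -map_comp; congr sumn; apply: eq_map => a /=.
by rewrite count_map.
Qed.

Lemma sumn_map_leq_count A (B : seq A) (F : A -> nat) (p : pred A) X Y :
  (forall a, F a <= p a * X + Y) ->
  sumn [seq F a | a <- B] <= count p B * X + size B * Y.
Proof. by move=> FX; elim: B => //= a B IH; have := FX a; case: (p a) => /=; lia. Qed.

Lemma sumn_mulr A (B : seq A) (F : A -> nat) c :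
  sumn [seq F a | a <- B] * c = sumn [seq F a * c | a <- B].
Proof. by elim: B => //= a B <-; rewrite mulnDl. Qed.

Lemma count_all_words A (P : pred A) T B :
  count (all P) (words T B) = count P B ^ T.
Proof.
elim: T => // T IH; rewrite count_wordsS expnS.
have -> : [seq count (fun t => all P (a :: t)) (words T B) | a <- B]
        = [seq P a * count P B ^ T | a <- B].
  apply: eq_map => a /=; case: (P a) => /=; first by rewrite mul1n -IH.
  by rewrite count_pred0.
by rewrite -sumn_mulr sumn_count.
Qed.

Lemma size_words A T (B : seq A) : size (words T B) = size B ^ T.
Proof.
rewrite -(count_predT (words T B)) (eq_count (a2 := all predT)) => [|t].
  by rewrite count_all_words count_predT.
by rewrite all_predT.
Qed.

Lemma all_words A (Q : pred A) T B :
  all Q B -> all (fun t => (size t == T) && all Q t) (words T B).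
Proof.
move=> QB; elim: T => [|T IH] //=.
move: (words T B) IH => Ts QTs.
elim: B QB => //= a B IHB /andP[Qa QB].
rewrite all_cat IHB // andbT all_map.
by apply: sub_all QTs => t /= /andP[/eqP -> ->]; rewrite Qa eqxx.
Qed.

Lemma card_ord_nth (T : Type) (s : seq T) d m (p : pred T) :
  size s = m.+1 -> #|[set r : 'I_m.+1 | p (nth d s r)]| = count p s.
Proof.
move=> sz; rewrite cardsE cardE /enum_mem size_filter -enumT.
rewrite -(count_map val (fun i => p (nth d s i))) val_enum_ord -sz.
by rewrite -[in RHS](mkseq_nth d s) /mkseq count_map.
Qed.

Fixpoint bad_steps (X A : Type) (step : X -> A -> X) (bad : X -> A -> bool)
    (s : X) (l : seq A) : nat :=
  if l is a :: l' then bad s a + bad_steps step bad (step s a) l' else 0.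

Lemma count_bad_steps_tail (X A : Type) (step : X -> A -> X) (bad : X -> A -> bool)
    (B : seq A) D :
  (forall s, count (bad s) B * D <= size B) ->
  forall T s k, count (fun l => k <= bad_steps step bad s l) (words T B) * D ^ k
                <= 'C(T, k) * size B ^ T.
Proof.
move=> hB; elim=> [|T IH] s k.
  by case: k => [|k] //=; rewrite muln1 bin0.
rewrite count_wordsS sumn_mulr; case: k => [|k].
  rewrite bin0 mul1n expn0 expnS -size_words.
  apply: leq_trans (sumn_map_leq_count (p := pred0) (X := 0) (Y := size (words T B)) _ _) _.
    by move=> a /=; rewrite muln1 count_size.
  by rewrite muln0.
apply: leq_trans (sumn_map_leq_count (p := bad s) (X := 'C(T, k) * size B ^ T * D)
                  (Y := 'C(T, k.+1) * size B ^ T) _ _) _.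
  move=> a /=; case: (bad s a) => /=.
    rewrite (eq_count (a2 := fun t => k <= bad_steps step bad (step s a) t));
      last by move=> t; rewrite add1n ltnS.
    have := IH (step s a) k; rewrite expnS mul1n.
    move: (count _ _) ('C(T, k)) (size B ^ T) ('C(T, k.+1)) => c C P C' h; nia.
  by rewrite (eq_count (a2 := fun t => k < bad_steps step bad (step s a) t)) ?IH.
have := hB s; rewrite binS expnS.
move: (count _ _) ('C(T, k)) ('C(T, k.+1)) (size B ^ T) => cb c1 c2 P h.
have h2 : cb * D * (c1 * P) <= size B * (c1 * P) by rewrite leq_mul2r h orbT.
nia.
Qed.

Lemma bin_leq_exp2 T k : 'C(T, k) <= 2 ^ T.
Proof.
elim: T k => [|T IH] [|k] //; first by rewrite bin0 expn_gt0.
by rewrite binS expnS mul2n -addnn leq_add.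
Qed.

Fixpoint parity (r u : seq bool) : bool :=
  match r, u with
  | r0 :: r', u0 :: u' => (r0 && u0) (+) parity r' u'
  | _, _ => false
  end.

Definition bits01 := [:: false; true].

Lemma count_parity_eq L U V : size U = size V -> size U <= L -> U != V ->
  (count (fun r => parity r U == parity r V) (words L bits01)).*2 = 2 ^ L.
Proof.
elim: L U V => [|L IH] [|u0 U] [|v0 V] // [sUV] sUL neqUV.
have {}sUL : size U <= L := sUL.
rewrite count_wordsS /= addn0.
have sW : size (words L bits01) = 2 ^ L by rewrite size_words.
case: (eqVneq U V) => [eUV|nUV]; first subst V.
  have nu0v0 : u0 != v0 by apply: contra_neq neqUV => ->.
  clear neqUV.
  rewrite (@eq_count _ (fun t => u0 (+) parity t U == v0 (+) parity t U) pred0) => [|t].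
    rewrite count_pred0 addn0 (eq_count (a2 := predT)) => [|t]; last by rewrite eqxx.
    by rewrite count_predT sW expnS mul2n.
  by move: nu0v0; case: u0; case: v0; case: (parity t U).
have {neqUV} IH' := IH U V sUV sUL nUV.
case: (eqVneq u0 v0) => [<-|nu0v0].
  rewrite (@eq_count _ (fun t => u0 (+) parity t U == u0 (+) parity t V)
                    (fun t => parity t U == parity t V)) => [|t].
    by rewrite doubleD IH' expnS mul2n -addnn.
  by case: u0; case: (parity t U); case: (parity t V).
rewrite (@eq_count _ (fun t => u0 (+) parity t U == v0 (+) parity t V)
                  (predC (fun t => parity t U == parity t V))) => [|t].
  by rewrite count_predC sW expnS mul2n.
by move: nu0v0; case: u0; case: v0 => //= _; case: (parity t U); case: (parity t V).
Qed.

(* Little-endian binary expansion: [drop k (bits L z)] are the high-order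
   bits, i.e. the binary expansion of [z %/ 2 ^ k]. *)
Fixpoint bits (L z : nat) : seq bool :=
  if L is L'.+1 then odd z :: bits L' z./2 else [::].

Lemma size_bits L z : size (bits L z) = L.
Proof. by elim: L z => //= L IH z; rewrite IH. Qed.

Lemma half_ltn_exp2 L z : z < 2 ^ L.+1 -> z./2 < 2 ^ L.
Proof. by rewrite ltn_half_double -mul2n -expnS. Qed.

Lemma bits_inj L z1 z2 :
  z1 < 2 ^ L -> z2 < 2 ^ L -> bits L z1 = bits L z2 -> z1 = z2.
Proof.
elim: L z1 z2 => [|L IH] z1 z2 /=; first by rewrite expn0; case: z1; case: z2.
move=> lt1 lt2 [eo eh].
have := IH _ _ (half_ltn_exp2 lt1) (half_ltn_exp2 lt2) eh.
have := odd_double_half z1; have := odd_double_half z2.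
by rewrite eo -!muln2; move: (odd z2) => b; lia.
Qed.

Lemma leq_top_diff_bit L z1 z2 k : z1 < 2 ^ L -> z2 < 2 ^ L ->
  drop k.+1 (bits L z1) = drop k.+1 (bits L z2) ->
  drop k (bits L z1) != drop k (bits L z2) ->
  (z1 <= z2) = ~~ nth false (bits L z1) k.
Proof.
elim: L z1 z2 k => [|L IH] z1 z2 k /=; first by case: k.
move=> lt1 lt2; have e1 := odd_double_half z1; have e2 := odd_double_half z2.
case: k => [|k] /=.
  rewrite !drop0 => /(bits_inj (half_ltn_exp2 lt1) (half_ltn_exp2 lt2)) eh neq.
  have : odd z1 != odd z2 by apply: contraNneq neq => ->; rewrite eh.
  move: e1 e2; case: (odd z1); case: (odd z2) => //= e1 e2 _; rewrite -!muln2 in e1 e2; lia.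
move=> ed neq; rewrite -(IH _ _ k (half_ltn_exp2 lt1) (half_ltn_exp2 lt2) ed neq).
have /eqP nh : z1./2 != z2./2 by apply: contra_neq neq => ->.
rewrite -!muln2 in e1 e2.
by apply/idP/idP; move: e1 e2; case: (odd z1); case: (odd z2) => /= e1 e2 le; lia.
Qed.

Lemma sub_count_all T (a p q : pred T) s :
  all a s -> (forall x, a x -> p x -> q x) -> count p s <= count q s.
Proof.
elim: s => //= x s IH /andP[ax allas] pq; rewrite leq_add ?IH //.
by case: (p x) (pq x ax) => // ->.
Qed.

Definition lg s := trunc_log 2 s.*2.

Lemma lg0 : lg 0 = 0.
Proof. by rewrite /lg trunc_log0. Qed.

Lemma lgE s : 0 < s -> lg s = (trunc_log 2 s).+1.
Proof. by move=> s_gt0; rewrite /lg trunc_log2_double. Qed.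

Lemma leq_lg m n : m <= n -> lg m <= lg n.
Proof. by move=> le_mn; rewrite /lg leq_trunc_log // leq_double. Qed.

Lemma lg_half s t : 0 < s -> t <= s./2 -> lg t < lg s.
Proof.
move=> s_gt0 le_ts; rewrite (lgE s_gt0).
have [half0|half_gt0] := posnP s./2.
  by move: le_ts; rewrite half0 leqn0 => /eqP ->; rewrite lg0.
apply: leq_ltn_trans (leq_lg le_ts) _.
by rewrite (lgE half_gt0) (trunc_log2S (n := s)) //; move: half_gt0; rewrite -divn2; lia.
Qed.

Lemma lg_succ_leq n : 0 < n -> lg n.+1 <= (trunc_log 2 n).+2.
Proof.
move=> n_gt0; have : lg n.+1 <= lg n.*2 by apply: leq_lg; lia.
by rewrite /lg !trunc_log2_double ?double_gt0 //; lia.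
Qed.

Lemma midpoint_bounds lo h : lo < h ->
  let mid := (lo + h)./2 in
  [/\ lo <= mid, mid < h, mid - lo <= (h - lo)./2 & h - mid.+1 <= (h - lo)./2].
Proof. by move=> lt_lo_h; rewrite /= -!divn2; split; lia. Qed.

Lemma all_head_filter T (P Q : pred T) d s :
  all P s -> has Q s -> P (head d [seq x <- s | Q x]).
Proof. by elim: s => //= x s IH /andP[Px Ps]; case: (Q x) => //= /IH; apply. Qed.

Section NoisySearch.

Variables (A : Type) (L ks : nat) (test : nat -> A -> bool).

(* In a state [(lo, stk)], [lo] is a lower bound for [ks] and [stk] an
   increasing stack of accepted candidates, one of which is [>= ks]; only the
   top is ever retested, so wrongly accepted candidates are eventually popped. *)
Definition search_step (s : nat * seq nat) (a : A) : nat * seq nat :=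
  let: (lo, stk) := s in
  let h := head L stk in
  let mid := (lo + h)./2 in
  if test h a then
    if h == lo then (lo, stk) else if test mid a then (lo, mid :: stk) else (mid.+1, stk)
  else (h.+1, behead stk).

Definition misled (s : nat * seq nat) (a : A) : bool :=
  let: (lo, stk) := s in
  let h := head L stk in
  let mid := (lo + h)./2 in
  (test h a && (h < ks)) || (test mid a && (mid < ks)).

(* [lg] counts the halvings separating [lo] from the least correct candidate. *)
Definition potential (s : nat * seq nat) : nat :=
  let: (lo, stk) := s in
  2 * count (fun h => h < ks) stk + lg (head L [seq h <- stk | ks <= h] - lo).

Definition search_inv (s : nat * seq nat) : bool :=
  let: (lo, stk) := s in
  [&& sorted ltn stk, all (fun h => lo <= h) stk, has (fun h => ks <= h) stk & lo <= ks].

Definition search_step_spec s a : Prop :=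
  [/\ search_inv (search_step s a),
      potential s = 0 -> search_step s a = s,
      potential (search_step s a) <= potential s + 2 &
      ~~ misled s a -> 0 < potential s -> potential (search_step s a) < potential s].

Hypothesis test_complete : forall k a, ks <= k -> test k a.

Lemma search_step_correct_top lo h rest a :
  ks <= h -> search_inv (lo, h :: rest) -> search_step_spec (lo, h :: rest) a.
Proof.
move=> hks /and4P[/= srt /andP[loh lorest] _ loks].
have hks' : (h < ks) = false by rewrite ltnNge hks.
have hmin : all (leq h.+1) rest by apply: (order_path_min ltn_trans).
have c0 : count (fun y => y < ks) rest = 0.
  apply/eqP; rewrite -leqn0 leqNgt -has_count; apply/hasPn => y /(allP hmin) /= hy.
  by rewrite -leqNgt; lia.
rewrite /search_step_spec /search_step /misled /potential /search_inv /=.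
rewrite test_complete // hks hks' c0 /=.
case: eqP => [eh|/eqP nlo].
  subst lo; have ek : h = ks by apply/eqP; rewrite eqn_leq hks loks.
  rewrite -ek in c0 *; rewrite (addnn h) doubleK !ltnn andbF /= c0 leqnn /=.
  by rewrite subnn lg0 ltnn; split => //; apply/and3P; split.
have lo_h : lo < h by rewrite ltn_neqAle eq_sym nlo.
have [m1 m2 m3 m4] := midpoint_bounds lo_h; set mid := (lo + h)./2 in m1 m2 m3 m4 *.
have pos : 0 < lg (h - lo) by rewrite lgE // subn_gt0.
have lt_mid_lo : lg (mid - lo) < lg (h - lo) by apply: lg_half; rewrite ?subn_gt0.
have lt_h_mid : lg (h - mid.+1) < lg (h - lo) by apply: lg_half; rewrite ?subn_gt0.
have hmin' : all (leq mid.+1) rest by apply: sub_all hmin => y /=; lia.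
case trm: (test mid a) => /=; last first.
  have mid_ks : mid < ks by rewrite ltnNge; apply: contraFN trm => /test_complete.
  rewrite m2 mid_ks hmin' srt hks hks' c0 /=.
  by split => //; [move=> p0; lia | lia].
rewrite m2 srt m1 loh lorest loks hks hks' c0 /=.
case: (leqP ks mid) => hkm /=.
  by split => //; [move=> p0; lia | lia].
by split => //; [move=> p0; lia | lia].
Qed.

Lemma search_step_wrong_top lo h rest a :
  h < ks -> search_inv (lo, h :: rest) -> search_step_spec (lo, h :: rest) a.
Proof.
move=> hks /and4P[/= srt /andP[loh lorest] hhas loks].
have hks' : (ks <= h) = false by rewrite leqNgt hks.
have hmin : all (leq h.+1) rest by apply: (order_path_min ltn_trans).
have hrest : has (leq ks) rest by move: hhas; rewrite /= hks'.
have hclo := all_head_filter L lorest hrest.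
have hch := all_head_filter L hmin hrest.
move: hclo hch; set hc := head L _ => hclo hch; pose cr := count (fun y => y < ks) rest.
rewrite /search_step_spec /search_step /misled /potential /search_inv /=.
rewrite hks hks' -/cr -/hc /=.
case trh: (test h a) => /=; last first.
  rewrite (path_sorted srt) hmin hrest hks -/cr -/hc /=.
  have : lg (hc - h.+1) <= lg (hc - lo) by apply: leq_lg; lia.
  by split => // *; lia.
case: eqP => [eh|/eqP nlo].
  by subst lo; rewrite /= srt leqnn lorest hrest loks hks hks' -/cr -/hc /=; split => // *; lia.
have lo_h : lo < h by rewrite ltn_neqAle eq_sym nlo.
have [m1 m2 _ _] := midpoint_bounds lo_h; set mid := (lo + h)./2 in m1 m2 *.
have mid_ks : mid < ks by apply: ltn_trans hks.
have hks'' : (ks <= mid) = false by rewrite leqNgt mid_ks.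
case trm: (test mid a) => /=.
  rewrite m2 srt m1 loh lorest hrest loks mid_ks hks hks' hks'' -/cr -/hc /=.
  by split => // *; lia.
rewrite m2 srt (sub_all _ hmin) => [|y /=]; last by lia.
rewrite hrest mid_ks hks hks' -/cr -/hc /=.
have : lg (hc - mid.+1) <= lg (hc - lo) by apply: leq_lg; lia.
by split => // *; lia.
Qed.

Lemma search_stepP s a : search_inv s -> search_step_spec s a.
Proof.
case: s => lo [|h rest]; first by case/and4P.
by case: (leqP ks h) => hks; [apply: search_step_correct_top | apply: search_step_wrong_top].
Qed.

Fixpoint search_walk s (l : seq A) : nat * seq nat :=
  if l is a :: l' then search_walk (search_step s a) l' else s.

Lemma search_walk_spec (l : seq A) s : search_inv s ->
  [/\ search_inv (search_walk s l),
      potential s = 0 -> potential (search_walk s l) = 0 &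
      potential (search_walk s l) = 0 \/
      potential (search_walk s l) + size l
        <= potential s + 3 * bad_steps search_step misled s l].
Proof.
elim: l s => [|a l IH] s inv /=; first by split => //; right; lia.
have [inv' stay grow drop] := search_stepP a inv.
have [winv wstay wdrop] := IH _ inv'.
split => //; first by move=> p0; apply: wstay; rewrite stay.
have [p0|pos] := posnP (potential s).
  by left; apply: wstay; rewrite stay.
case: wdrop => [->|wdrop]; [by left | right].
case hb: (misled s a) => /=; first by lia.
by have := drop (negbT hb) pos; lia.
Qed.

Lemma potential0_head s : search_inv s -> potential s = 0 -> head L s.2 = ks.
Proof.
case: s => lo [|h rest] //= /and4P[_ /andP[loh _] _ loks] /eqP.
rewrite addn_eq0 muln_eq0 /= addn_eq0 => /andP[/andP[hks _] hlg].
move: hks; rewrite eqb0 -leqNgt => hks; move: hlg; rewrite hks /=.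
by apply: contraTeq => nh; rewrite -lt0n lgE ?subn_gt0 //; lia.
Qed.

Lemma count_misled (Bs : seq A) s c :
  (forall k, k < ks -> count (test k) Bs * 2 ^ c.+1 <= size Bs) ->
  count (misled s) Bs * 2 ^ c <= size Bs.
Proof.
move=> false_pos; case: s => lo stk; rewrite /misled.
set h := head L stk; set mid := (lo + h)./2.
have false_pos' k : count (fun a => test k a && (k < ks)) Bs * 2 ^ c.+1 <= size Bs.
  case: (ltnP k ks) => hk.
    by rewrite (eq_count (a2 := test k)) ?false_pos // => a; rewrite andbT.
  by rewrite (eq_count (a2 := pred0)) ?count_pred0 // => a; rewrite andbF.
have := count_predUI (fun a => test h a && (h < ks)) (fun a => test mid a && (mid < ks)) Bs.
have := false_pos' h; have := false_pos' mid; rewrite expnS.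
move: (count _ _) (count _ _) (count _ _) (count _ _) (2 ^ c) => cb ci c1 c2 X h1 h2 h3.
have : cb * X <= (c1 + c2) * X by rewrite leq_mul2r; apply/orP; right; lia.
nia.
Qed.

(* With [9 K] rounds the search fails only if at least [2 K] rounds are
   misled, since the potential starts below [3 K]. *)
Lemma search_failure_count (Bs : seq A) K :
  (forall k, k < ks -> count (test k) Bs * 2 ^ 10 <= size Bs) ->
  ks <= L -> lg L <= 3 * K ->
  count (fun l => potential (search_walk (0, [:: L]) l) != 0) (words (9 * K) Bs)
    * 2 ^ (9 * K) <= size Bs ^ (9 * K).
Proof.
move=> false_pos ksL lgL.
have inv0 : search_inv (0, [:: L]) by rewrite /search_inv /= ksL.
have pot0 : potential (0, [:: L]) <= 3 * K.
  by rewrite /potential /= ksL (_ : L < ks = false) ?subn0 // ltnNge ksL.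
have fail l : size l = 9 * K -> potential (search_walk (0, [:: L]) l) != 0 ->
    2 * K <= bad_steps search_step misled (0, [:: L]) l.
  move=> sl /eqP; have [_ _ [//|]] := search_walk_spec l inv0; lia.
have tail := @count_bad_steps_tail _ _ search_step misled Bs _
  (fun s => count_misled s false_pos) (9 * K) (0, [:: L]) (2 * K).
have sizes := @all_words _ predT (9 * K) Bs (all_predT Bs).
have le_count : count (fun l => potential (search_walk (0, [:: L]) l) != 0) (words (9 * K) Bs)
    <= count (fun l => 2 * K <= bad_steps search_step misled (0, [:: L]) l) (words (9 * K) Bs).
  by apply: (sub_count_all sizes) => l /andP[/eqP sl _]; apply: fail.
have split_exp : (2 ^ 9) ^ (2 * K) = 2 ^ (9 * K) * 2 ^ (9 * K).
  by rewrite -expnM -expnD; congr (2 ^ _); lia.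
rewrite split_exp mulnA in tail.
rewrite -(@leq_pmul2r (2 ^ (9 * K))) ?expn_gt0 //.
apply: leq_trans (leq_mul (leq_mul le_count (leqnn _)) (leqnn _)) _.
by apply: leq_trans tail _; rewrite mulnC leq_mul2l bin_leq_exp2 orbT.
Qed.
End NoisySearch.

Definition looks_equal (U V : seq bool) k (rho : seq (seq bool)) : bool :=
  all (fun r => parity r (drop k U) == parity r (drop k V)) rho.

Definition search_answer (U : seq bool) L (s : nat * seq nat) : bool :=
  if head L s.2 is k.+1 then ~~ nth false U k else true.

Section Protocols.

Variables (n : nat) (S : {set 'I_n}) (uA vB : input n -> seq bool).

Fixpoint eq_test k (rho : seq (seq bool)) (ct cf : proto (input n)) : proto (input n) :=
  match rho with
  | [::] => ct
  | r :: rho' =>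
    PNode true (fun x => parity r (drop k (uA x)))
      (PNode false (fun x => parity r (drop k (vB x))) (eq_test k rho' ct cf) cf)
      (PNode false (fun x => parity r (drop k (vB x))) cf (eq_test k rho' ct cf))
  end.

(* When the search ends at [ks = k.+1], bit [k] is the highest bit where the
   two numbers differ, so Alice's number is the smaller one iff her bit [k] is
   [0]; [ks = 0] means the numbers are equal. *)
Definition final_proto L (s : nat * seq nat) : proto (input n) :=
  if head L s.2 is k.+1 then PNode true (fun x => nth false (uA x) k) (PLeaf true) (PLeaf false)
  else PLeaf true.

Fixpoint search_proto L (s : nat * seq nat) (rhos : seq (seq (seq bool))) : proto (input n) :=
  match rhos with
  | [::] => final_proto L s
  | rho :: rhos' =>
    let: (lo, stk) := s in
    let h := head L stk in
    let mid := (lo + h)./2 in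
    eq_test h rho
      (if h == lo then search_proto L (lo, stk) rhos'
       else eq_test mid rho (search_proto L (lo, mid :: stk) rhos')
                            (search_proto L (mid.+1, stk) rhos'))
      (search_proto L (h.+1, behead stk) rhos')
  end.

Lemma run_eq_test k rho ct cf x :
  run (eq_test k rho ct cf) x =
  if looks_equal (uA x) (vB x) k rho then run ct x else run cf x.
Proof.
rewrite /looks_equal; elim: rho => [|r rho IH] //=.
by rewrite IH; case: (parity r _); case: (parity r _) => //=; case: (all _ _).
Qed.

Lemma run_search_proto L s rhos x :
  run (search_proto L s rhos) x =
  search_answer (uA x) L (search_walk L (looks_equal (uA x) (vB x)) s rhos).
Proof.
elim: rhos s => [|rho rhos IH] [lo stk] /=.
  by rewrite /final_proto /search_answer; case: (head L stk).
rewrite run_eq_test /search_step; case: (looks_equal _ _ _ _) => //=.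
case: eqP => _; first exact: IH.
by rewrite run_eq_test; case: (looks_equal _ _ _ _).
Qed.

Lemma depth_eq_test k rho ct cf :
  depth (eq_test k rho ct cf) <= 2 * size rho + maxn (depth ct) (depth cf).
Proof. by elim: rho => [|r rho IH] /=; lia. Qed.

Lemma depth_search_proto L c s rhos :
  all (fun rho => size rho == c) rhos ->
  depth (search_proto L s rhos) <= 4 * c * size rhos + 1.
Proof.
elim: rhos s => [|rho rhos IH] [lo stk] /=.
  by rewrite /final_proto /=; case: (head L stk) => [|k] _ /=; lia.
case/andP=> /eqP sz all_sz; set h := head L stk; set mid := (lo + h)./2.
apply: leq_trans (depth_eq_test _ _ _ _) _; rewrite sz.
have := IH (lo, stk) all_sz; have := IH (h.+1, behead stk) all_sz.
case: eqP => _ /=; first by lia.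
have := depth_eq_test mid rho (search_proto L (lo, mid :: stk) rhos)
                               (search_proto L (mid.+1, stk) rhos).
have := IH (lo, mid :: stk) all_sz; have := IH (mid.+1, stk) all_sz.
rewrite sz; lia.
Qed.

Hypothesis uA_Alice :
  forall x y : input n, (forall i, i \in S -> x i = y i) -> uA x = uA y.
Hypothesis vB_Bob :
  forall x y : input n, (forall i, i \notin S -> x i = y i) -> vB x = vB y.

Lemma valid_eq_test k rho ct cf :
  valid S ct -> valid S cf -> valid S (eq_test k rho ct cf).
Proof.
move=> vt vf; elim: rho => [|r rho IH] //=.
have dA : depends_only (fun i => i \in S) (fun x => parity r (drop k (uA x))).
  by move=> x y /uA_Alice ->.
have dB : depends_only (fun i => i \notin S) (fun x => parity r (drop k (vB x))).
  by move=> x y /vB_Bob ->.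
by do !split.
Qed.

Lemma valid_search_proto L s rhos : valid S (search_proto L s rhos).
Proof.
elim: rhos s => [|rho rhos IH] [lo stk] /=.
  rewrite /final_proto; case: (head L stk) => [|k] //=; split => //.
  by move=> x y /uA_Alice ->.
by apply: valid_eq_test => //; case: eqP => _ //; apply: valid_eq_test.
Qed.

End Protocols.

Lemma drop_eq_cutoff (T : eqType) (U V : seq T) : size U = size V ->
  exists2 ks, ks <= size U & forall k, (drop k U == drop k V) = (ks <= k).
Proof.
move=> sUV.
have hex : exists k, drop k U == drop k V by exists (size U); rewrite !drop_oversize ?sUV.
case: (ex_minnP hex) => ks eq_ks min_ks; exists ks.
  by apply: min_ks; rewrite !drop_oversize ?sUV.
move=> k; apply/idP/idP => [/min_ks //|le_ks_k].
by rewrite -(subnK le_ks_k) -!drop_drop (eqP eq_ks).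
Qed.

Lemma search_answer_bits L z1 z2 ks s : z1 < 2 ^ L -> z2 < 2 ^ L ->
  (forall k, (drop k (bits L z1) == drop k (bits L z2)) = (ks <= k)) ->
  head L s.2 = ks -> search_answer (bits L z1) L s = (z1 <= z2).
Proof.
move=> lt1 lt2 cut hd; rewrite /search_answer hd.
case: ks cut {hd} => [|k] cut.
  by have := cut 0; rewrite !drop0 leqnn => /eqP eq; rewrite (bits_inj lt1 lt2 eq) leqnn.
have := cut k.+1; have := cut k; rewrite leqnn ltnn => ne /eqP eq.
by rewrite (leq_top_diff_bit lt1 lt2 eq) ?ne.
Qed.

Lemma count_looks_equal_neq U V L c k : size U = size V -> size U <= L ->
  drop k U != drop k V ->
  count (looks_equal U V k) (words c (words L bits01)) * 2 ^ c = (2 ^ L) ^ c.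
Proof.
move=> sUV sUL neq; rewrite /looks_equal count_all_words -expnMn muln2.
rewrite count_parity_eq // ?size_drop ?sUV //.
by apply: leq_trans (leq_subr _ _) _; rewrite -sUV.
Qed.

Definition coins L K := words (9 * K) (words 10 (words L bits01)).

Lemma size_coins_gt0 L K : 0 < size (coins L K).
Proof. by rewrite /coins !size_words !expn_gt0. Qed.

Lemma depth_search_coins n (uA vB : input n -> seq bool) L K s l :
  l \in coins L K -> depth (search_proto uA vB L s l) <= 360 * K + 1.
Proof.
move=> l_in.
have inner : all (fun rho => size rho == 10) (words 10 (words L bits01)).
  by apply: sub_all (@all_words _ predT 10 _ (all_predT _)) => rho /andP[].
have /allP/(_ l l_in)/andP[/eqP size_l shape_l] := all_words (9 * K) inner.
by apply: leq_trans (depth_search_proto _ _ _ _ shape_l) _; rewrite size_l; lia.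
Qed.

Lemma comparison_error n (uA vB : input n -> seq bool) L K x z1 z2 :
  uA x = bits L z1 -> vB x = bits L z2 -> z1 < 2 ^ L -> z2 < 2 ^ L ->
  lg L <= 3 * K ->
  count (fun l => run (search_proto uA vB L (0, [:: L]) l) x != (z1 <= z2)) (coins L K)
    * 2 ^ (9 * K) <= size (coins L K).
Proof.
move=> eU eV lt1 lt2 lgL.
have sUV : size (bits L z1) = size (bits L z2) by rewrite !size_bits.
have [ks ksL cut] := drop_eq_cutoff sUV; rewrite size_bits in ksL.
pose test := looks_equal (bits L z1) (bits L z2).
have complete k rho : ks <= k -> test k rho.
  by rewrite -cut => /eqP eq; apply/allP => r _; rewrite eq.
have false_pos k : k < ks ->
    count (test k) (words 10 (words L bits01)) * 2 ^ 10 <= size (words 10 (words L bits01)).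
  by move=> lt; rewrite count_looks_equal_neq ?size_words ?size_bits // cut -ltnNge.
have inv0 : search_inv ks (0, [:: L]) by rewrite /search_inv /= ksL.
rewrite /coins size_words.
apply: leq_trans (search_failure_count complete false_pos ksL lgL).
rewrite leq_mul2r; apply/orP; right; apply: sub_count => l /=.
rewrite run_search_proto eU eV -/test; apply: contra_neq => p0.
have [winv _ _] := search_walk_spec L complete l inv0.
exact: search_answer_bits lt1 lt2 cut (potential0_head winv p0).
Qed.

Lemma card_input n : #|input n| = 2 ^ n.
Proof. by rewrite card_ffun card_bool card_ord. Qed.

Lemma card_input_lt n (A : {set input n}) x : x \notin A -> #|A| < 2 ^ n.
Proof.
move=> nAx; rewrite -card_input -(cardsC A) -addn1 leq_add2l card_gt0.
by apply/set0Pn; exists x; rewrite inE.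
Qed.

Section Ranks.

Variables (n : nat) (g1 g2 : input n -> int).

(* The number of values of [g1] and [g2] below [z], counted with
   multiplicity: an order embedding of these [2 ^ n.+1] values into [nat]. *)
Definition rank (z : int) : nat :=
  #|[set y | (g1 y < z)%R]| + #|[set y | (g2 y < z)%R]|.

Lemma leq_rank x : (g1 x <= g2 x)%R = (rank (g1 x) <= rank (g2 x)).
Proof.
rewrite /rank; case: leP => le12.
  by apply/esym; rewrite leq_add // subset_leq_card //; apply/subsetP => y;
    rewrite !inE => /lt_le_trans; apply.
apply/esym/negbTE; rewrite -ltnNge -addnS; apply: leq_add.
  by apply: subset_leq_card; apply/subsetP => y; rewrite !inE => /lt_trans; apply.
apply: proper_card; apply/properP; split.
  by apply/subsetP => y; rewrite !inE => /lt_trans; apply.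
by exists x; rewrite !inE ?ltxx ?le12.
Qed.

Lemma rank_lt z x : z = g1 x \/ z = g2 x -> rank z < 2 ^ n.+1.
Proof.
have le (A : {set input n}) : #|A| <= 2 ^ n by rewrite -card_input max_card.
rewrite /rank expnS mul2n -addnn => -[->|->].
  by rewrite -addSn leq_add // (card_input_lt (x := x)) // inE ltxx.
by rewrite -addnS leq_add // (card_input_lt (x := x)) // inE ltxx.
Qed.

End Ranks.

Lemma threshold_split n (f : input n -> bool) (S : {set 'I_n}) : is_threshold f ->
  exists sA sB : input n -> int,
    [/\ forall x y : input n, (forall i, i \in S -> x i = y i) -> sA x = sA y,
        forall x y : input n, (forall i, i \notin S -> x i = y i) -> sB x = sB y &
        forall x, f x = (sA x <= sB x)%R].
Proof.
move=> [a [b fE]].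
exists (fun y : input n => \sum_(i < n | i \in S) a i * (y i)%:Z)%R,
       (fun y : input n => b - \sum_(i < n | i \notin S) a i * (y i)%:Z)%R.
split=> [x y eq_xy | x y eq_xy | x].
- by apply: eq_bigr => i /eq_xy ->.
- by congr (_ - _)%R; apply: eq_bigr => i /eq_xy ->.
- by rewrite fE (bigID (fun i => i \in S)) /= -lerBrDr.
Qed.

Theorem lemma4 :
  exists C1 C2 : nat,
    forall n : nat, 2 <= n ->
    forall f : input n -> bool, is_threshold f ->
    forall S : {set 'I_n},
    exists (m : nat) (P : 'I_m.+1 -> proto (input n)),
      (forall r, valid S (P r)) /\
      (forall r, depth (P r) <= C2 * trunc_log 2 n) /\
      (forall x : input n, #|[set r | run (P r) x != f x]| * n <= C1 * m.+1).
Proof.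
exists 1, 721 => n n_ge2 f thf S.
have [sA [sB [dA dB fE]]] := threshold_split S thf.
pose L := n.+1; pose K := (trunc_log 2 n).+1.
pose uA x := bits L (rank sA sB (sA x)); pose vB x := bits L (rank sA sB (sB x)).
pose P l := search_proto uA vB L (0, [:: L]) l.
have coinsE : size (coins L K) = (size (coins L K)).-1.+1 by rewrite prednK ?size_coins_gt0.
exists (size (coins L K)).-1, (fun r => P (nth [::] (coins L K) r)).
split; [move=> r | split=> [r | x]].
- by apply: valid_search_proto => [x y /dA eqA | x y /dB eqB]; rewrite /uA /vB ?eqA ?eqB.
- have r_lt : r < size (coins L K) by rewrite [X in _ < X]coinsE ltn_ord.
  apply: leq_trans (depth_search_coins _ _ _ (mem_nth [::] r_lt)) _.
  have : 0 < trunc_log 2 n by rewrite trunc_log_gt0.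
  by rewrite /K; lia.
have lgL : lg L <= 3 * K by have := lg_succ_leq (ltnW n_ge2); rewrite /L /K; lia.
have nK : n <= 2 ^ (9 * K).
  by apply: leq_trans (ltnW (trunc_log_ltn n (isT : 1 < 2))) _; rewrite leq_pexp2l //; lia.
rewrite (@card_ord_nth _ _ _ _ (fun l => run (P l) x != f x)) // -coinsE mul1n fE leq_rank.
apply: leq_trans (comparison_error (uA := uA) (vB := vB) (x := x) erefl erefl _ _ lgL).
- by rewrite leq_mul2l nK orbT.
- exact: rank_lt (or_introl erefl).
- exact: rank_lt (or_intror erefl).
Qed.
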